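(* Let $k\ge 1$ be a fixed integer and let $n$ be sufficiently large with respect to $k$. Let $G$ be a graph of order $n$ with $|E(G)|\le kn$ and $\Delta(G)<2n/3+o(n)$. Let $T$ be a tree with $|V(T)|\le n$ and $\Delta(T)<60(2k+1)n^{3/4}$. Let $I\subset V(G)$ with $|I|\le k$ such that $d_G(v)\le 2k$ for every $v\in I$. Let $I'\subset V(T)$ with $|I'|=|I|$ such that $d_T(v')\le 2$ for every $v'\in I'$. Suppose there is a packing $h':I'\to I$ of $T[I']$ and $G[I]$. Then there is a packing $f':V(T)\to V(G)$ of $T$ and $G$ such that (1) $\Delta(f'(T)\oplus G)\le 2n/3+o(n)$, and (2) $f'(v')=h'(v')$ for every $v'\in I'$.
   Context: For graphs $H_1,H_2$ with $|V(H_1)|\le |V(H_2)|$, an injection $f:V(H_1)\to V(H_2)$ is a packing of $H_1$ and $H_2$ if $E(f(H_1))\cap E(H_2)=\emptyset$, where $f(H_1)$ is the graph on $V(H_2)$ with edge set $\{f(u)f(v):uv\in E(H_1)\}$. For graphs $G,H$ (vertex sets not necessarily disjoint), $G\oplus H$ is the graph with vertex set $V(G)\cup V(H)$ and edge set $E(G)\cup E(H)$. $T[I']$, $G[I]$ denote induced subgraphs; $\Delta$ is the maximum degree, $d_G(v)$ the degree of $v$ in $G$. The $o(n)$ terms are with respect to $n\to\infty$ for fixed $k$. *)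

From HB Require Import structures.
From mathcomp Require Import all_boot all_order all_algebra.
Set Implicit Arguments. Unset Strict Implicit. Unset Printing Implicit Defensive.
Import Order.TTheory GRing.Theory Num.Theory.

Definition simple_graph (V : finType) (e : rel V) : Prop :=
  symmetric e /\ irreflexive e.

Definition deg (V : finType) (e : rel V) (x : V) : nat := #|[set y | e x y]|.

(* maximum degree Delta(G) (0 for the empty graph) *)
Definition maxdeg (V : finType) (e : rel V) : nat := \max_(x : V) deg e x.

Definition edges (V : finType) (e : rel V) : {set {set V}} :=
  [set [set p.1; p.2] | p in [set p : V * V | e p.1 p.2]].

Definition connected_graph (V : finType) (e : rel V) : Prop :=
  forall x y : V, connect e x y.

Definition acyclic_graph (V : finType) (e : rel V) : Prop :=
  forall c : seq V, 3 <= size c -> uniq c -> ~~ cycle e c.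

Definition is_tree (V : finType) (e : rel V) : Prop :=
  [/\ simple_graph e, 0 < #|V|, connected_graph e & acyclic_graph e].

Definition packing (V1 V2 : finType) (e1 : rel V1) (e2 : rel V2)
  (f : V1 -> V2) : Prop :=
  injective f /\ (forall u v, e1 u v -> ~~ e2 (f u) (f v)).

Definition image_union (V1 V2 : finType) (e1 : rel V1) (e2 : rel V2)
  (f : V1 -> V2) : rel V2 :=
  fun x y => e2 x y || [exists u, exists v, [&& e1 u v, f u == x & f v == y]].

(* A maximum degree bound is free: Δ(f(T) ⊕ G) <= Δ(G) + Δ(T), and the bound on Δ(T)^4
   makes Δ(T) = o(n).  The work is to find a packing extending h' at all.

   At most n/100 vertices of G have degree above 200k, and when T is almost as large as G
   some tree vertices must be placed on them.  These are chosen greedily among the tree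
   vertices of degree at most 2 (a third of any forest), pairwise non-adjacent and away
   from I', so that every tree vertex sees at most 9n/10 of total G-degree among the
   images of its chosen neighbours.  Together with h' this anchors an injection whose
   other vertices go to low-degree vertices of G.  A conflicting edge then has an endpoint
   u outside the anchor; exchanging the image of u with a vertex y of G avoiding the
   fewer than n vertices that could create a new conflict strictly decreases the number
   of conflicting edges. *)

From HB Require Import structures.
From mathcomp Require Import all_boot all_order all_algebra perm.
From mathcomp Require Import zify lra.
Set Implicit Arguments. Unset Strict Implicit. Unset Printing Implicit Defensive.
Import Order.TTheory GRing.Theory Num.Theory.

Lemma card_bigcup_le (I T : finType) (P : pred I) (F : I -> {set T}) :
  #|\bigcup_(i | P i) F i| <= \sum_(i | P i) #|F i|.
Proof.
apply: (big_ind2 (fun (A : {set T}) m => #|A| <= m)) => [|A a B b leA leB|//].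
  by rewrite cards0.
by apply: leq_trans (leq_card_setU A B) _; apply: leq_add.
Qed.

Lemma notin_of_card_lt (T : finType) (A B : {set T}) :
  #|A| < #|B| -> exists2 x, x \in B & x \notin A.
Proof.
move=> ltAB; apply/subsetPn; apply: contraTN ltAB => /subset_leq_card.
by rewrite leqNgt.
Qed.

Lemma card_gt_markov (T : finType) (F : T -> nat) s :
  #|[set x | s < F x]| * s.+1 <= \sum_x F x.
Proof.
rewrite -sum_nat_const [X in _ <= X](bigID (fun x => s < F x)) /=.
apply: leq_trans (leq_addr _ _); rewrite big_mkcond [X in _ <= X]big_mkcond.
by apply: leq_sum => x _; rewrite inE; case: ifP.
Qed.

Lemma exists_inj_into (T1 T2 : finType) (y0 : T2) (R : {set T1}) (Y : {set T2}) :
  #|R| <= #|Y| ->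
  exists2 phi : T1 -> T2, {in R &, injective phi} & {in R, forall t, phi t \in Y}.
Proof.
move=> leRY; pose phi t := nth y0 (enum Y) (index t (enum R)).
have ltY t : t \in R -> index t (enum R) < size (enum Y).
  by move=> tR; rewrite -cardE; apply: leq_trans leRY; rewrite cardE index_mem mem_enum.
exists phi => [t1 t2 t1R t2R /eqP|t tR]; last by rewrite -mem_enum mem_nth ?ltY.
rewrite nth_uniq ?enum_uniq ?ltY // => /eqP/(congr1 (nth t1 (enum R))).
by rewrite !nth_index ?mem_enum.
Qed.

Section Degrees.

Variables (V : finType) (e : rel V).

Definition arcs : {set V * V} := [set p | e p.1 p.2].

Lemma sum_deg_arcs : \sum_x deg e x = #|arcs|.
Proof.
rewrite -sum1dep_card /deg.
under eq_bigr => x _ do rewrite -sum1dep_card big_mkcond.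
by rewrite pair_big [RHS]big_mkcond.
Qed.

Lemma leq_deg_maxdeg x : deg e x <= maxdeg e.
Proof. exact: (@leq_bigmax _ (fun x => deg e x) x). Qed.

Lemma card_high_deg k n : 0 < k -> \sum_x deg e x <= 2 * (k * n) ->
  100 * #|[set x | 200 * k < deg e x]| <= n.
Proof.
move=> k_gt0 sum_le; have := leq_trans (card_gt_markov (deg e) (200 * k)) sum_le.
by rewrite -(leq_pmul2l k_gt0); nia.
Qed.

Lemma card_arcs_le_edges : simple_graph e -> #|arcs| <= 2 * #|edges e|.
Proof.
move=> [e_sym e_irr].
pose fwd := [set p in arcs | enum_rank p.1 < enum_rank p.2].
pose swap (p : V * V) := (p.2, p.1).
have swap_inj : injective swap by move=> [a b] [c d] [-> ->].
have arcsE : arcs = fwd :|: swap @: fwd.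
  apply/setP => -[a b]; rewrite in_setU !inE /=.
  have [eab|neab] /= := boolP (e a b); last first.
    apply/esym/negbTE/imsetP => -[[c d]]; rewrite !inE /= => /andP[ecd _] [ad bc].
    by rewrite ad bc e_sym ecd in neab.
  have ab : enum_rank a != enum_rank b.
    by apply: contraTneq eab => /enum_rank_inj ->; rewrite e_irr.
  case: ltnP => [//|ba]; apply/esym/imsetP; exists (b, a) => //.
  by rewrite !inE /= e_sym eab ltn_neqAle eq_sym ab ba.
have fwd_inj : {in fwd &, injective (fun p : V * V => [set p.1; p.2])}.
  move=> [a b] [c d]; rewrite !inE /= => /andP[_ ab] /andP[_ cd] E.
  have /set2P[ac|ad] : a \in [set c; d] by rewrite -E set21.
    have /set2P[bc|bd] : b \in [set c; d] by rewrite -E set22.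
      by rewrite ac bc ltnn in ab.
    by rewrite ac bd.
  have /set2P[bc|bd] : b \in [set c; d] by rewrite -E set22.
    by rewrite ad bc in ab; rewrite ltnNge ltnW in ab.
  by rewrite ad bd ltnn in ab.
have fwd_edges : #|fwd| <= #|edges e|.
  rewrite -(card_in_imset fwd_inj); apply/subset_leq_card/subsetP.
  by move=> _ /imsetP[p /setIdP[pa _] ->]; apply: imset_f.
rewrite arcsE mul2n -addnn; apply: leq_trans (leq_card_setU _ _) _.
by rewrite card_imset //; apply: leq_add.
Qed.

End Degrees.

Section Forests.

Variables (V : finType) (e : rel V).
Hypotheses (e_simple : simple_graph e) (e_acyclic : acyclic_graph e).

Lemma exists_maximal_path (A : {set V}) a0 : a0 \in A ->
  exists x, exists p, [/\ x \in A, all (mem A) p, uniq (x :: p), path e x p &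
    forall w, w \in A -> e (last x p) w -> w \in x :: p].
Proof.
move=> a0A.
pose good x (p : seq V) := [&& x \in A, all (mem A) p, uniq (x :: p) & path e x p].
pose P j := [exists x, exists t : j.-tuple V, good x t].
have P0 : exists j, P j.
  by exists 0; apply/existsP; exists a0; apply/existsP; exists [tuple]; rewrite /good a0A.
have Pbound j : P j -> j <= #|A|.
  case/existsP=> x /existsP[t /and4P[xA tA xt _]]; rewrite -(size_tuple t).
  apply/ltnW; rewrite cardE -[(size t).+1]/(size (x :: t)).
  apply: uniq_leq_size => // y; rewrite mem_enum.
  by case/predU1P=> [->//|/(allP tA)].
have [j /existsP[x /existsP[t /and4P[xA tA xt ext]]] jmax] := ex_maxnP P0 Pbound.
exists x, t; split=> // w wA ew; apply: contraT => wt.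
have : P (size (rcons t w)).
  apply/existsP; exists x; apply/existsP; exists (in_tuple (rcons t w)).
  rewrite /good -rcons_cons rcons_uniq wt xt rcons_path ext ew all_rcons tA xA.
  by rewrite [mem A w]wA.
by move/jmax; rewrite size_rcons size_tuple ltnn.
Qed.

Lemma acyclic_last_nbr x p w : uniq (x :: p) -> path e x p ->
  w \in x :: p -> e (last x p) w -> w = last x (take (size p).-1 p).
Proof.
have [e_sym e_irr] := e_simple.
move=> xp_uniq xp_path wxp; move: xp_uniq xp_path; case/splitPl: wxp => p1 p2 <-.
rewrite cat_path last_cat => xp_uniq /andP[_ p2_path] ew.
have p2_uniq : uniq (last x p1 :: p2).
  move: {xp_uniq}(xp_uniq); rewrite -cat_cons cat_uniq /= => /and3P[_ dis ->]; rewrite andbT.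
  by apply: contra dis => lp2; apply/hasP; exists (last x p1); rewrite // mem_last.
case: p2 => [|y [|z q]] in xp_uniq p2_uniq p2_path ew *.
- by rewrite /= e_irr in ew.
- by rewrite size_cat addn1 /= take_size_cat.
- have := e_acyclic (c := last x p1 :: y :: z :: q) isT p2_uniq.
  by rewrite /cycle rcons_path p2_path ew.
Qed.

Lemma forest_low_vertex (A : {set V}) : A != set0 ->
  exists2 v, v \in A & #|[set w in A | e v w]| <= 1.
Proof.
case/set0Pn=> a0 /exists_maximal_path[x [p [xA pA xp_uniq xp_path xp_max]]].
exists (last x p).
  by case: (lastP p) pA => // q y; rewrite last_rcons all_rcons => /andP[].
apply/card_le1_eqP => w1 w2; rewrite !inE => /andP[w1A ew1] /andP[w2A ew2].
by rewrite (acyclic_last_nbr xp_uniq xp_path (xp_max _ w1A ew1) ew1)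
   (acyclic_last_nbr xp_uniq xp_path (xp_max _ w2A ew2) ew2).
Qed.

Lemma forest_card_arcs_in (A : {set V}) :
  #|[set p | [&& p.1 \in A, p.2 \in A & e p.1 p.2]]| <= 2 * #|A|.
Proof.
have [e_sym _] := e_simple.
elim: {A}#|A|.+1 {-2}A (ltnSn #|A|) => // m IH A ltAm.
have [->|/forest_low_vertex[v vA lowv]] := eqVneq A set0.
  by rewrite cards0 leqn0 cards_eq0; apply/eqP/setP => p; rewrite !inE.
set N := [set w in A | e v w] in lowv; set A' := A :\ v.
have ltA'm : #|A'| < m by move: ltAm; rewrite (cardsD1 v A) vA.
have sub : [set p | [&& p.1 \in A, p.2 \in A & e p.1 p.2]] \subset
    [set p | [&& p.1 \in A', p.2 \in A' & e p.1 p.2]] :|: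
    ((fun w => (v, w)) @: N :|: (fun w => (w, v)) @: N).
  apply/subsetP => -[a b]; rewrite !inE /= => /and3P[aA bA eab].
  have [av|nav] := eqVneq a v; first by rewrite av imset_f ?orbT // inE bA -av eab.
  have [bv|nbv] := eqVneq b v; first by rewrite bv imset_f ?orbT // inE aA e_sym -bv eab.
  by rewrite aA bA eab.
apply: leq_trans (subset_leq_card sub) _.
apply: leq_trans (leq_card_setU _ _) _; rewrite (cardsD1 v A) vA -/A' mulnDr addnC.
apply: leq_add; last exact: IH ltA'm.
apply: leq_trans (leq_card_setU _ _) _; rewrite -[2 * _]/(1 + 1).
by apply: leq_add; apply: leq_trans (leq_imset_card _ _) _.
Qed.

Lemma forest_sum_deg : \sum_x deg e x <= 2 * #|V|.
Proof.
rewrite sum_deg_arcs -cardsT; apply: leq_trans (forest_card_arcs_in _).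
by apply/subset_leq_card/subsetP => p; rewrite !inE.
Qed.

Lemma forest_card_low_deg : #|V| <= 3 * #|[set t | deg e t <= 2]|.
Proof.
have := leq_trans (card_gt_markov (deg e) 2) forest_sum_deg.
rewrite -(cardsC [set t | deg e t <= 2]).
have -> : ~: [set t | deg e t <= 2] = [set t | 2 < deg e t].
  by apply/setP => t; rewrite !inE ltnNge.
lia.
Qed.

End Forests.

Lemma maxdeg_image_union (V1 V2 : finType) (e1 : rel V1) (e2 : rel V2) (f : V1 -> V2) :
  injective f -> maxdeg (image_union e1 e2 f) <= maxdeg e2 + maxdeg e1.
Proof.
move=> f_inj; apply/bigmax_leqP => x _; rewrite /deg.
case: (pickP (fun u => f u == x)) => [u /eqP fux|no_pre].
  have sub : [set y | image_union e1 e2 f x y] \subset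
      [set y | e2 x y] :|: f @: [set v | e1 u v].
    apply/subsetP => y; rewrite !inE => /orP[->//|].
    case/existsP=> u' /existsP[v /and3P[eu'v /eqP fu'x /eqP <-]].
    by rewrite imset_f ?orbT // inE (f_inj u u') // fux fu'x.
  apply: leq_trans (subset_leq_card sub) _; apply: leq_trans (leq_card_setU _ _) _.
  apply: leq_add; first exact: leq_deg_maxdeg.
  exact: leq_trans (leq_imset_card _ _) (leq_deg_maxdeg _ u).
apply: leq_trans (leq_addr _ _); apply: leq_trans (leq_deg_maxdeg e2 x).
apply/subset_leq_card/subsetP => y; rewrite !inE => /orP[//|].
by case/existsP=> u /existsP[v /and3P[_ fux _]]; rewrite no_pre in fux.
Qed.

Definition nbhd (V : finType) (e : rel V) (X : {set V}) : {set V} :=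
  \bigcup_(a in X) [set t | e a t].

Lemma mem_nbhd (V : finType) (e : rel V) (X : {set V}) a t :
  a \in X -> e a t -> t \in nbhd e X.
Proof. by move=> aX eat; apply/bigcupP; exists a; rewrite ?inE. Qed.

Lemma card_nbhd (V : finType) (e : rel V) (X : {set V}) d :
  {in X, forall a, deg e a <= d} -> #|nbhd e X| <= d * #|X|.
Proof.
move=> X_deg; apply: leq_trans (card_bigcup_le _ _) _.
by rewrite mulnC -sum_nat_const; apply: leq_sum.
Qed.

Section Spreading.

Variables (VG VT : finType) (eG : rel VG) (eT : rel VT).
Hypotheses (eT_sym : symmetric eT) (eT_irr : irreflexive eT).
Variables (Bd : {set VG}) (I' : {set VT}) (n k D : nat).
Hypotheses (n_gt0 : 0 < n) (degT_le : forall t, deg eT t <= D)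
  (Bd_deg : {in Bd, forall x, 10 * deg eG x < 7 * n})
  (sum_degG : \sum_x deg eG x <= 2 * (k * n))
  (I'_deg : {in I', forall t, deg eT t <= 2}) (card_I' : #|I'| <= k).

Definition load (S : {set VT}) (g : VT -> VG) (a : VT) : nat :=
  \sum_(t in S | eT a t) deg eG (g t).

Record spread (S : {set VT}) (g : VT -> VG) : Prop := Spread {
  spread_inj : {in S &, injective g};
  spread_Bd : {in S, forall t, g t \in Bd};
  spread_deg : {in S, forall t, deg eT t <= 2};
  spread_indep : {in S, forall s a, a \in S :|: I' -> ~~ eT s a};
  spread_disj : {in S, forall t, t \notin I'};
  spread_load : forall a, 10 * load S g a <= 9 * n }.

Lemma sum_load (S : {set VT}) (g : VT -> VG) :
  {in S, forall t, deg eT t <= 2} -> {in S &, injective g} ->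
  \sum_a load S g a <= 2 * \sum_x deg eG x.
Proof.
move=> S_deg g_inj; rewrite /load (exchange_big_dep (mem S)) /=; last by move=> a t _ /andP[].
apply: (@leq_trans (\sum_(t in S) 2 * deg eG (g t))).
  apply: leq_sum => t tS; rewrite sum_nat_cond_const leq_mul2r; apply/orP; right.
  apply: leq_trans (S_deg t tS); apply/subset_leq_card/subsetP => a.
  by rewrite !inE tS eT_sym.
rewrite -big_distrr leq_mul2l /= -(big_imset (fun x => deg eG x) g_inj) /=.
by rewrite [X in _ <= X](bigID (mem (g @: S))) leq_addr.
Qed.

Lemma card_heavy (S : {set VT}) (g : VT -> VG) :
  spread S g -> #|[set a | n < 5 * load S g a]| <= 20 * k.
Proof.
case=> g_inj _ S_deg _ _ _.
have markov := card_gt_markov (fun a => 5 * load S g a) n.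
rewrite -big_distrr /= in markov.
have := sum_load S_deg g_inj; move: markov sum_degG n_gt0; nia.
Qed.

Lemma load_setU1 (S : {set VT}) (g : VT -> VG) s x a : s \notin S ->
  load (s |: S) (fun t => if t == s then x else g t) a =
  (if eT a s then deg eG x else 0) + load S g a.
Proof.
move=> sS; rewrite /load big_mkcondr /= big_setU1 //= eqxx big_mkcondr /=; congr (_ + _).
apply: eq_bigr => t tS; have ts : t != s by apply: contraNneq sS => <-.
by rewrite (negbTE ts).
Qed.

Lemma exists_spread_candidate (S : {set VT}) (g : VT -> VG) : spread S g ->
  3 * #|S| + 3 * k + 20 * k * D < #|[set t | deg eT t <= 2]| ->
  exists s, [/\ deg eT s <= 2, s \notin S, s \notin I',
    {in S :|: I', forall a, ~~ eT s a} & forall a, eT a s -> 5 * load S g a <= n].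
Proof.
move=> Sg room; set H := [set a | n < 5 * load S g a].
have [s] : exists2 s, s \in [set t | deg eT t <= 2] &
    s \notin S :|: nbhd eT S :|: I' :|: nbhd eT I' :|: nbhd eT H.
  apply: notin_of_card_lt; apply: leq_ltn_trans room.
  have nH : #|nbhd eT H| <= D * (20 * k).
    apply: leq_trans (card_nbhd (fun a _ => degT_le a)) _.
    by rewrite leq_mul2l card_heavy ?orbT.
  have := card_nbhd (spread_deg Sg); have := card_nbhd I'_deg; rewrite !cardsU; lia.
rewrite inE => s_deg; rewrite !inE !negb_or => /andP[/andP[/andP[/andP[sS sNS] sI'] sNI'] sNH].
exists s; split=> // [a aX|a eas].
  by apply/negP => esa; case/setUP: aX => aX; [move: sNS | move: sNI'];
    rewrite (mem_nbhd aX) // eT_sym.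
by rewrite leqNgt; apply: contra sNH => aH; apply: (mem_nbhd (a := a)); rewrite ?inE.
Qed.

Lemma spread_extend (S : {set VT}) (g : VT -> VG) : spread S g -> #|S| < #|Bd| ->
  3 * #|S| + 3 * k + 20 * k * D < #|[set t | deg eT t <= 2]| ->
  exists s, exists x, s \notin S /\ spread (s |: S) (fun t => if t == s then x else g t).
Proof.
move=> Sg ltSBd room; case: (Sg) => g_inj g_Bd S_deg S_indep S_disj S_load.
have [x xBd xS] : exists2 x, x \in Bd & x \notin g @: S.
  by apply: notin_of_card_lt; rewrite card_in_imset.
have [s [s_deg sS sI' s_far s_light]] := exists_spread_candidate Sg room.
exists s, x; split => //; split.
- move=> t1 t2 /setU1P[->|t1S] /setU1P[->|t2S] //=; rewrite ?eqxx.
  + by case: eqP => [->//|_ xg]; rewrite xg imset_f in xS.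
  + by case: eqP => [->//|_ xg]; rewrite -xg imset_f in xS.
  + case: eqP => [t1s|_]; first by rewrite -t1s t1S in sS.
    case: eqP => [t2s|_]; first by rewrite -t2s t2S in sS.
    exact: g_inj.
- by move=> t /setU1P[->|tS]; rewrite ?eqxx //; case: eqP => _; [exact: xBd|exact: g_Bd].
- by move=> t /setU1P[->|tS]; [exact: s_deg | exact: S_deg].
- move=> t /setU1P[->|tS] a; rewrite -setUA => /setU1P[->|aX].
  + by rewrite eT_irr.
  + exact: s_far.
  + by rewrite eT_sym s_far // inE tS.
  + exact: S_indep.
- by move=> t /setU1P[->|tS]; [exact: sI' | exact: S_disj].
move=> a; rewrite load_setU1 //; case: ifP => [eas|_]; last exact: S_load.
by have := s_light a eas; have := Bd_deg xBd; lia.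
Qed.

Lemma spread0 (g : VT -> VG) : spread set0 g.
Proof.
split=> [t1 t2|t|t|t|t|a]; rewrite ?inE //.
by rewrite /load big_mkcond big1 // => t _; rewrite inE.
Qed.

Lemma exists_spread (x0 : VG) j : j <= #|Bd| ->
  (0 < j -> 3 * j + 3 * k + 20 * k * D <= #|[set t | deg eT t <= 2]|) ->
  exists S : {set VT}, exists g : VT -> VG, #|S| = j /\ spread S g.
Proof.
elim: j => [_ _|j IH ltjBd room].
  by exists set0, (fun=> x0); split; [exact: cards0 | exact: spread0].
have [S [g [jS Sg]]] : exists S : {set VT}, exists g : VT -> VG, #|S| = j /\ spread S g.
  by apply: IH => [|_]; [exact: ltnW | have := room isT; lia].
rewrite -jS in ltjBd room.
have [|s [x [sS Sg']]] := spread_extend Sg ltjBd (leq_trans _ (room isT)); first lia.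
by exists (s |: S), (fun t => if t == s then x else g t); rewrite cardsU1 sS jS.
Qed.

End Spreading.

Section Repair.

Variables (VG VT : finType) (eG : rel VG) (eT : rel VT).
Hypotheses (eG_sym : symmetric eG) (eT_sym : symmetric eT) (eT_irr : irreflexive eT).
Variables (Bd : {set VG}) (S I' : {set VT}) (f0 : VT -> VG) (s0 D W0 : nat).
Hypotheses (small_deg : forall x, x \notin Bd -> deg eG x <= s0)
  (degT_le : forall t, deg eT t <= D)
  (f0_Bd : {in S, forall t, f0 t \in Bd})
  (f0_load : forall a, load eG eT S f0 a <= W0)
  (room : #|Bd| + #|I'| + W0 + s0 * D + s0 + s0 * D < #|VG|).

Definition anchored (f : VT -> VG) :=
  [/\ injective f, {in S :|: I', f =1 f0} & forall t, t \notin S -> f t \notin Bd].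

Definition conflicts (f : VT -> VG) : {set VT * VT} :=
  [set p | eT p.1 p.2 && eG (f p.1) (f p.2)].

(* [tperm (f u) y \o f] moves [u] to [y] and the vertex at [y], if any, to [f u]; these
   conditions ensure that the exchange creates no new conflicting edge. *)
Definition swap_target (f : VT -> VG) u y :=
  [/\ ~~ eG (f u) y, forall u', eT u u' -> ~~ eG (f u') y &
      forall w w', eG (f u) (f w') -> eT w' w -> f w != y].

Lemma exists_swap_target f u : anchored f -> u \notin S ->
  exists y, [/\ y \notin Bd, y \notin f @: I' & swap_target f u y].
Proof.
move=> [f_inj f_anchor f_out] uS; set x := f u.
have xBd : x \notin Bd by exact: f_out.
set E4 := \bigcup_(u' | eT u u') [set y | eG (f u') y].
set E6 := \bigcup_(w' | eG x (f w')) f @: [set w | eT w' w].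
have [y _] : exists2 y, y \in setT &
    y \notin Bd :|: f @: I' :|: [set y | eG x y] :|: E4 :|: E6.
  apply: notin_of_card_lt; rewrite cardsT; apply: leq_ltn_trans room.
  have c4 : #|E4| <= W0 + s0 * D.
    apply: leq_trans (card_bigcup_le _ _) _; rewrite (bigID (mem S)) /=; apply: leq_add.
      apply: leq_trans (f0_load u); rewrite /load; apply: eq_leq.
      by apply: eq_big => [t|t /andP[_ tS]]; rewrite 1?andbC // f_anchor // inE tS.
    apply: (@leq_trans (\sum_(t | eT u t && (t \notin S)) s0)).
      by apply: leq_sum => t /andP[_ tS]; apply/small_deg/f_out.
    rewrite sum_nat_cond_const mulnC leq_mul2l; apply/orP; right.
    apply: leq_trans (degT_le u); apply/subset_leq_card/subsetP => t.
    by rewrite !inE => /andP[].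
  have c6 : #|E6| <= s0 * D.
    apply: leq_trans (card_bigcup_le _ _) _.
    apply: (@leq_trans (\sum_(w' | eG x (f w')) D)).
      by apply: leq_sum => w' _; apply: leq_trans (leq_imset_card f _) (degT_le w').
    rewrite sum_nat_cond_const leq_mul2r; apply/orP; right; apply: leq_trans (small_deg xBd).
    rewrite -(card_imset _ f_inj); apply/subset_leq_card/subsetP => _ /imsetP[w xw ->].
    by rewrite inE in xw; rewrite inE.
  have := leq_imset_card f I'; have := small_deg xBd; rewrite /deg !cardsU; lia.
rewrite !inE !negb_or => /andP[/andP[/andP[/andP[yBd yI'] nxy] yE4] yE6].
exists y; split=> //; split=> // [u' uu'|w w' xw' w'w].
  by apply: contra yE4 => u'y; apply/bigcupP; exists u'; rewrite ?inE.
by apply: contraNneq yE6 => <-; apply/bigcupP; exists w'; rewrite // imset_f ?inE.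
Qed.

Lemma swap_no_new_conflict f u y a b : injective f -> swap_target f u y -> eT a b ->
  eG (tperm (f u) y (f a)) (tperm (f u) y (f b)) -> a != u /\ f a != y.
Proof.
move=> f_inj [nxy u_nbrs far] eab; have fb_u : f b = f u -> b = u := @f_inj b u.
have [au|nau] := eqVneq a u.
  rewrite au tpermL; case: tpermP => [/fb_u bu|fby|_ _] eG'.
  - by rewrite au bu eT_irr in eab.
  - by rewrite eG_sym eG' in nxy.
  - by move: (u_nbrs b); rewrite -au eab eG_sym eG' => /(_ isT).
move=> eG'; split=> //; apply/eqP => fay; move: eG'; rewrite fay tpermR.
case: tpermP => [/fb_u bu|fby|_ _] eG'.
- by rewrite eG' in nxy.
- have ab : a = b by apply: f_inj; rewrite fay fby.
  by rewrite ab eT_irr in eab.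
- by move: (far a b eG'); rewrite eT_sym eab fay eqxx => /(_ isT).
Qed.

Lemma conflicts_swap f u v y : injective f -> swap_target f u y ->
  (u, v) \in conflicts f -> #|conflicts (tperm (f u) y \o f)| < #|conflicts f|.
Proof.
move=> f_inj yu uv; rewrite (cardsD1 (u, v) (conflicts f)) uv add1n ltnS.
apply/subset_leq_card/subsetP => -[a b]; rewrite !inE /= => /andP[eab eG'ab].
have [au fay] := swap_no_new_conflict f_inj yu eab eG'ab.
have [bu fby] : b != u /\ f b != y.
  by apply: (swap_no_new_conflict (b := a) f_inj yu); [rewrite eT_sym | rewrite eG_sym].
have fixed t : t != u -> f t != y -> tperm (f u) y (f t) = f t.
  by move=> tu fty; apply: tpermD; rewrite eq_sym ?(inj_eq f_inj).
by rewrite !fixed // in eG'ab; rewrite xpair_eqE (negbTE au) eab eG'ab.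
Qed.

Lemma anchored_swap f u y : anchored f -> u \notin S :|: I' ->
  y \notin Bd -> y \notin f @: I' -> anchored (tperm (f u) y \o f).
Proof.
move=> [f_inj f_anchor f_out] uSI yBd yI'; split.
- exact: inj_comp perm_inj f_inj.
- move=> t tSI /=; rewrite -f_anchor //; apply: tpermD.
    by rewrite (inj_eq f_inj); apply: contraNneq uSI => ->.
  case/setUP: tSI => tX; last by apply: contraNneq yI' => ->; apply: imset_f.
  by apply: contraNneq yBd => ->; rewrite f_anchor ?inE ?tX ?f0_Bd.
- have uS : u \notin S by apply: contra uSI => uS; rewrite inE uS.
  by move=> t tS /=; case: tpermP => _; rewrite ?f_out.
Qed.

Hypothesis f0_pack : {in S :|: I' &, forall a b, eT a b -> ~~ eG (f0 a) (f0 b)}.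

Lemma anchored_conflict f : anchored f -> conflicts f != set0 ->
  exists u v, u \notin S :|: I' /\ (u, v) \in conflicts f.
Proof.
move=> [_ f_anchor _] /set0Pn[[a b]]; rewrite inE /= => /andP[eab eGab].
have [aX|aX] := boolP (a \in S :|: I'); last by exists a, b; split=> //; rewrite inE eab eGab.
have [bX|bX] := boolP (b \in S :|: I').
  by move: (f0_pack aX bX eab); rewrite -!f_anchor // eGab.
by exists b, a; split=> //; rewrite inE /= eT_sym eab eG_sym eGab.
Qed.

Lemma exists_anchored_packing f : anchored f -> exists2 f', anchored f' & packing eT eG f'.
Proof.
elim: {f}#|conflicts f|.+1 {-2}f (ltnSn #|conflicts f|) => // m IH f ltm fA.
have f_inj : injective f by case: fA.
have [no_conflict|/(anchored_conflict fA)[u [v [uX uv]]]] := eqVneq (conflicts f) set0.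
  exists f => //; split=> // a b eab; apply: contraT => /negbNE eGab.
  by rewrite -(in_set0 (a, b)) -no_conflict inE eab eGab.
have uS : u \notin S by apply: contra uX => uS; rewrite inE uS.
have [y [yBd yI' yu]] := exists_swap_target fA uS.
apply: (IH (tperm (f u) y \o f)); last exact: anchored_swap.
exact: leq_trans (conflicts_swap f_inj yu uv) ltm.
Qed.

End Repair.

Lemma exists_anchor (VG VT : finType) (y0 : VG) (Bd : {set VG}) (S I' : {set VT})
    (g h : VT -> VG) :
  {in S &, injective g} -> {in S, forall t, g t \in Bd} -> {in S, forall t, t \notin I'} ->
  {in I' &, injective h} -> {in I', forall t, h t \notin Bd} ->
  #|VT| + #|Bd| <= #|S| + #|VG| ->
  exists2 f : VT -> VG, injective f &
    [/\ {in I', f =1 h}, {in S, f =1 g} & forall t, t \notin S -> f t \notin Bd].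
Proof.
move=> g_inj g_Bd S_I' h_inj h_Bd room.
have hI'_Bd : h @: I' \subset ~: Bd.
  by apply/subsetP => _ /imsetP[t tI' ->]; rewrite inE h_Bd.
have [phi phi_inj phi_Y] : exists2 phi : VT -> VG, {in ~: (I' :|: S) &, injective phi} &
    {in ~: (I' :|: S), forall t, phi t \in ~: Bd :\: h @: I'}.
  apply: (exists_inj_into y0).
  have disjI'S : I' :&: S = set0.
    by apply/setP => t; rewrite !inE andbC; case: (boolP (t \in S)) => //= /S_I'/negbTE.
  have := cardsC (I' :|: S); have := cardsC Bd; have := cardsU I' S.
  rewrite cardsD (setIidPr hI'_Bd) card_in_imset // disjI'S cards0; lia.
pose f t := if t \in I' then h t else if t \in S then g t else phi t.
have phi_out t : t \notin I' -> t \notin S -> phi t \in ~: Bd :\: h @: I'.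
  by move=> tI' tS; apply: phi_Y; rewrite !inE negb_or tI' tS.
have f_hI' t : (f t \in h @: I') = (t \in I').
  rewrite /f; case: ifPn => [tI'|tI']; first exact: imset_f.
  case: ifPn => [tS|tS]; last by have := phi_out t tI' tS; rewrite inE => /andP[/negbTE].
  by apply/negbTE; apply: contraL (g_Bd t tS) => /(subsetP hI'_Bd); rewrite inE.
have f_Bd t : (f t \in Bd) = (t \in S).
  rewrite /f; case: ifPn => [tI'|tI'].
    by rewrite (negbTE (h_Bd t tI')); case: (boolP (t \in S)) => // /S_I'; rewrite tI'.
  case: ifPn => [tS|tS]; first exact: g_Bd.
  by have := phi_out t tI' tS; rewrite !inE => /andP[_ /negbTE].
exists f; last by split=> [t tI'|t tS|t]; rewrite ?f_Bd // /f ?tI' // ifN ?tS //; apply: S_I'.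
move=> t1 t2 e12; have eI' := f_hI' t1; have eS := f_Bd t1; rewrite e12 f_hI' in eI'.
rewrite e12 f_Bd in eS; move: e12; rewrite /f -eI' -eS.
case: ifPn => [t1I'|t1I']; first by apply: h_inj; rewrite // -eI'.
case: ifPn => [t1S|t1S]; first by apply: g_inj; rewrite // -eS.
by apply: phi_inj; rewrite !inE negb_or ?t1I' ?t1S -?eI' -?eS ?t1I' ?t1S.
Qed.

Theorem exists_tree_packing_extending (VG VT : finType) (eG : rel VG) (eT : rel VT)
    (n k D : nat) (I' : {set VT}) (h : VT -> VG) :
  0 < k -> simple_graph eG -> #|VG| = n -> \sum_x deg eG x <= 2 * (k * n) ->
  10 * maxdeg eG < 7 * n ->
  simple_graph eT -> acyclic_graph eT -> #|VT| <= n -> maxdeg eT <= D ->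
  100 * (100 * (k * D)) <= n -> 100 * (202 * k + 1) < n ->
  #|I'| <= k -> {in I', forall t, deg eT t <= 2} ->
  {in I', forall t, deg eG (h t) <= 2 * k} -> {in I' &, injective h} ->
  {in I' &, forall a b, eT a b -> ~~ eG (h a) (h b)} ->
  exists2 f, packing eT eG f & {in I', f =1 h}.
Proof.
move=> k_gt0 [eG_sym _] cardG sumG maxG simpT acyclT cardT maxT kD large cardI' I'_deg
  h_deg h_inj h_pack.
have [eT_sym eT_irr] := simpT.
have degT t : deg eT t <= D := leq_trans (leq_deg_maxdeg eT t) maxT.
pose s0 := 200 * k; pose Bd := [set x | s0 < deg eG x].
have cardBd : 100 * #|Bd| <= n := card_high_deg k_gt0 sumG.
have Bd_deg : {in Bd, forall x, 10 * deg eG x < 7 * n}.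
  by move=> x _; apply: leq_ltn_trans maxG; rewrite leq_mul2l leq_deg_maxdeg.
have small_deg x : x \notin Bd -> deg eG x <= s0 by rewrite inE -leqNgt.
have n_gt0 : 0 < n by lia.
have [y0 _] : exists y0 : VG, y0 \in VG by apply/card_gt0P; rewrite cardG.
have fit_Bd : #|VT| + #|Bd| - n <= #|Bd| by lia.
have fit_low : 0 < #|VT| + #|Bd| - n ->
    3 * (#|VT| + #|Bd| - n) + 3 * k + 20 * k * D <= #|[set t | deg eT t <= 2]|.
  by have := forest_card_low_deg simpT acyclT; rewrite -mulnA; lia.
have [S [g [cardS [g_inj g_Bd S_deg S_indep S_I' S_load]]]] :=
  exists_spread eT_sym eT_irr n_gt0 degT Bd_deg sumG I'_deg cardI' y0 fit_Bd fit_low.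
have h_out : {in I', forall t, h t \notin Bd}.
  by move=> t tI'; rewrite inE -leqNgt (leq_trans (h_deg t tI')) // leq_mul2r orbT.
have [|f0 f0_inj [f0_h f0_g f0_out]] := exists_anchor y0 g_inj g_Bd S_I' h_inj h_out; first lia.
have f0_Bd : {in S, forall t, f0 t \in Bd} by move=> t tS; rewrite f0_g ?g_Bd.
have f0_load a : load eG eT S f0 a <= 9 * n %/ 10.
  rewrite leq_divRL // mulnC /load (eq_bigr (fun t => deg eG (g t))); first exact: S_load.
  by move=> t /andP[tS _]; rewrite f0_g.
have room : #|Bd| + #|I'| + 9 * n %/ 10 + s0 * D + s0 + s0 * D < #|VG|.
  by rewrite cardG /s0 -mulnA; lia.
have f0_pack : {in S :|: I' &, forall a b, eT a b -> ~~ eG (f0 a) (f0 b)}.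
  move=> a b /setUP[aS|aI'] bX eab; first by move: (S_indep a aS b bX); rewrite eab.
  case/setUP: bX => [bS|bI']; last by rewrite !f0_h ?h_pack.
  by move: (S_indep b bS a); rewrite inE aI' orbT eT_sym eab => /(_ isT).
have [|f [_ f_anchor _] f_pack] := exists_anchored_packing eG_sym eT_sym eT_irr small_deg degT
  f0_Bd f0_load room f0_pack (f := f0); first by split.
by exists f => // t tI'; rewrite f_anchor ?f0_h // inE tI' orbT.
Qed.

Lemma mul_le_of_expn_lt (C D Q n e : nat) :
  D ^ e.+1 < C * n ^ e -> C * Q ^ e.+1 <= n -> Q * D <= n.
Proof.
move=> D_lt CQ_le; rewrite leqNgt; apply/negP => lt_n_QD.
have : n ^ e.+1 < n ^ e.+1.
  apply: leq_trans (_ : (Q * D) ^ e.+1 <= _); first by rewrite ltn_exp2r.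
  rewrite expnMn; apply: (@leq_trans (Q ^ e.+1 * (C * n ^ e))).
    by rewrite leq_mul2l ltnW ?orbT.
  by rewrite mulnA [Q ^ _ * C]mulnC [n ^ e.+1]expnS leq_mul2r CQ_le orbT.
by rewrite ltnn.
Qed.

Section RealBounds.

Local Open Scope ring_scope.

Lemma exists_natmul_gt (R : archiFieldType) (x eps : R) : 0 < eps ->
  exists m : nat, x < m%:R * eps.
Proof.
move=> eps_gt0; have x_eps_ge0 : 0 <= `|x| / eps by rewrite divr_ge0 // ltW.
exists (Num.bound (`|x| / eps)); rewrite -ltr_pdivrMr //.
by apply: le_lt_trans (archi_boundP x_eps_ge0); rewrite ler_pM2r ?invr_gt0 ?ler_norm.
Qed.

Lemma min_half_thirtieth (R : realFieldType) (eps : R) : 0 < eps ->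
  [/\ 0 < Order.min (eps / 2) (1 / 30), Order.min (eps / 2) (1 / 30) <= eps / 2
    & Order.min (eps / 2) (1 / 30) <= 1 / 30].
Proof.
move=> eps_gt0; rewrite lt_min !ge_min !lexx orbT.
by split=> //; apply/andP; split; lra.
Qed.

Lemma natr_lt_seven_tenths (R : realFieldType) (delta : R) (m n : nat) : delta <= 1 / 30 ->
  m%:R < (2%:R / 3%:R + delta) * n%:R -> (10 * m < 7 * n)%N.
Proof.
move=> delta_le m_lt; rewrite -(ltr_nat R) !natrM.
have : delta * n%:R <= 1 / 30 * n%:R by rewrite ler_wpM2r.
lra.
Qed.

Lemma natr_le_two_thirds_add (R : realFieldType) (eps delta : R) (m d n Q : nat) :
  0 < eps -> delta <= eps / 2 -> 2 < Q%:R * eps -> (Q * d <= n)%N ->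
  m%:R < (2%:R / 3%:R + delta) * n%:R ->
  (m + d)%:R <= (2%:R / 3%:R + eps) * n%:R.
Proof.
move=> eps_gt0 delta_le Q_eps Qd_le m_lt.
have d_le : d%:R * 2 <= eps * n%:R.
  apply: le_trans (_ : d%:R * (Q%:R * eps) <= _); first exact: ler_wpM2l (ltW Q_eps).
  rewrite mulrA -natrM mulnC [eps * _]mulrC.
  by apply: ler_wpM2r; [exact: ltW | rewrite ler_nat].
have : delta * n%:R <= eps / 2 * n%:R by rewrite ler_wpM2r.
rewrite natrD; lra.
Qed.

End RealBounds.

Theorem lemma2 :
  forall k : nat, 1 <= k ->
  forall eps : rat, (0 < eps)%R ->
  exists2 delta : rat, (0 < delta)%R &
  exists N : nat, forall n : nat, N <= n ->
  forall (VG VT : finType) (eG : rel VG) (eT : rel VT),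
    simple_graph eG -> #|VG| = n ->
    #|edges eG| <= k * n ->
    ((maxdeg eG)%:R < (2%:R / 3%:R + delta) * n%:R :> rat)%R ->
    is_tree eT -> #|VT| <= n ->
    (maxdeg eT) ^ 4 < (60 * (2 * k + 1)) ^ 4 * n ^ 3 ->
  forall (I : {set VG}) (I' : {set VT}),
    #|I| <= k -> (forall v, v \in I -> deg eG v <= 2 * k) ->
    #|I'| = #|I| -> (forall v', v' \in I' -> deg eT v' <= 2) ->
  forall h' : VT -> VG,
    (forall v', v' \in I' -> h' v' \in I) ->
    {in I' &, injective h'} ->
    (forall u' v', u' \in I' -> v' \in I' -> eT u' v' -> ~~ eG (h' u') (h' v')) ->
  exists f' : VT -> VG,
    [/\ packing eT eG f',
        ((maxdeg (image_union eT eG f'))%:R <= (2%:R / 3%:R + eps) * n%:R :> rat)%R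
      & forall v', v' \in I' -> f' v' = h' v'].
Proof.
move=> k k_gt0 eps eps_gt0; have [delta_gt0 delta_eps delta_small] := min_half_thirtieth eps_gt0.
exists (Order.min (eps / 2) (1 / 30))%R => //.
have [Qe Qe_eps] := exists_natmul_gt 2 eps_gt0; pose Q := 10000 * k + Qe.
exists ((60 * (2 * k + 1)) ^ 4 * Q ^ 4 + (100 * (202 * k + 1)).+1).
move=> n n_large VG VT eG eT simpG cardG edgesG maxG [simpT _ _ acyclT] cardT maxT I I' cardI
  I_deg cardI' I'_deg h' h'_I h'_inj h'_pack.
have QD : Q * maxdeg eT <= n.
  by apply: mul_le_of_expn_lt maxT _; apply: leq_trans n_large; rewrite leq_addr.
have large : 100 * (202 * k + 1) < n by apply: leq_trans n_large; rewrite leq_addl.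
have sumG : \sum_x deg eG x <= 2 * (k * n).
  rewrite sum_deg_arcs; apply: leq_trans (card_arcs_le_edges simpG) _.
  by rewrite leq_mul2l edgesG.
have kD : 100 * (100 * (k * maxdeg eT)) <= n.
  by apply: leq_trans QD; rewrite !mulnA leq_mul2r /Q leq_addr orbT.
have cardI'_le : #|I'| <= k by rewrite cardI'.
have [f f_pack f_h'] := exists_tree_packing_extending k_gt0 simpG cardG sumG
  (natr_lt_seven_tenths delta_small maxG) simpT acyclT cardT (leqnn _) kD large
  cardI'_le I'_deg (fun t tI' => I_deg _ (h'_I t tI')) h'_inj h'_pack.
exists f; split=> //.
have [f_inj _] := f_pack.
have QeD : Qe * maxdeg eT <= n by apply: leq_trans QD; rewrite leq_mul2r leq_addl orbT.
apply: le_trans (natr_le_two_thirds_add eps_gt0 delta_eps Qe_eps QeD maxG).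
by rewrite ler_nat maxdeg_image_union.
Qed.
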